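(* The inverse of $T$ (defined on the range of $T$) is unbounded, i.e. there is no constant $C<\infty$ with $\|\rho\|_{\ell^2(\mathbb{Z}^2)}\leq C\|T\rho\|_{L^2(\mathbb{Z}\times[-\pi,\pi])}$ for all $\rho\in\ell^2(\mathbb{Z}\times\mathbb{Z})$.
   Context: Fix a complex number $g_\omega\neq 0$ (coupling constant). For $\theta\in[-\pi,\pi]$ let $U_\omega(\theta)$ be the unitary operator on $\ell^2(\mathbb{Z})$ with matrix entries $(U_\omega(\theta))_{k,l}=e^{\mathrm{i}(k-l)\theta}J_{k-l}(2|g_\omega|)$, $k,l\in\mathbb{Z}$, where $J_n$ is the Bessel function of the first kind of order $n$. The forward operator $T:\ell^2(\mathbb{Z}\times\mathbb{Z})\to L^2(\mathbb{Z}\times[-\pi,\pi])$ (the target space carries counting measure times Lebesgue measure) is the bounded linear operator $$(T\rho)(l,\theta)=\big(U_\omega(\theta)\rho\,U_\omega(\theta)^*\big)_{l,l}=\sum_{m,n\in\mathbb{Z}}e^{\mathrm{i}(l-m)\theta}J_{l-m}(2|g_\omega|)\,\rho_{m,n}\,e^{-\mathrm{i}(l-n)\theta}J_{l-n}(2|g_\omega|),$$ where a matrix $\rho=(\rho_{j,k})_{j,k\in\mathbb{Z}}\in\ell^2(\mathbb{Z}\times\mathbb{Z})$ is identified with a Hilbert–Schmidt operator on $\ell^2(\mathbb{Z})$. *)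

From Stdlib Require Import Reals Lra ZArith List ClassicalEpsilon.
Open Scope R_scope.

Definition Cplx : Type := (R * R)%type.
Definition RtoC (r : R) : Cplx := (r, 0).
Definition Cadd (z w : Cplx) : Cplx := (fst z + fst w, snd z + snd w).
Definition Cmul (z w : Cplx) : Cplx :=
  (fst z * fst w - snd z * snd w, fst z * snd w + snd z * fst w).
Definition Cconj (z : Cplx) : Cplx := (fst z, - snd z).
Definition Cnorm2 (z : Cplx) : R := fst z * fst z + snd z * snd z.
Definition Cabs (z : Cplx) : R := sqrt (Cnorm2 z).
Definition Cexpi (t : R) : Cplx := (cos t, sin t).

(* the limit of a real sequence if it converges (junk value 0 otherwise) *)
Definition Rlim (u : nat -> R) : R :=
  match excluded_middle_informative (exists l, Un_cv u l) with
  | left H => proj1_sig (constructive_indefinite_description _ H)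
  | right _ => 0
  end.

Definition series (a : nat -> R) : R := Rlim (fun N => sum_f_R0 a N).

(* Riemann integral over [a,b] when integrable (junk 0 otherwise; all integrands
   used below are continuous, hence integrable) *)
Definition Rint (f : R -> R) (a b : R) : R :=
  match excluded_middle_informative (inhabited (Riemann_integrable f a b)) with
  | left H => RiemannInt (epsilon H (fun _ => True))
  | right _ => 0
  end.

Definition BesselJ_nat (n : nat) (x : R) : R :=
  series (fun k => (-1) ^ k / (INR (fact k) * INR (fact (k + n))) * (x / 2) ^ (2 * k + n)).

(* J_{-n} = (-1)^n J_n *)
Definition BesselJ (n : Z) (x : R) : R :=
  if Z.leb 0 n then BesselJ_nat (Z.to_nat n) x
  else (-1) ^ (Z.to_nat (- n)) * BesselJ_nat (Z.to_nat (- n)) x.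

(* ---------- symmetric finite sums over Z: k = -N .. N ---------- *)
Definition sumZ (N : nat) (f : Z -> R) : R :=
  fold_right Rplus 0 (map (fun i => f (Z.of_nat i - Z.of_nat N)%Z) (seq 0 (2 * N + 1))).
Definition sumZC (N : nat) (f : Z -> Cplx) : Cplx :=
  fold_right Cadd (0, 0) (map (fun i => f (Z.of_nat i - Z.of_nat N)%Z) (seq 0 (2 * N + 1))).

Definition Umat (g : Cplx) (theta : R) (k l : Z) : Cplx :=
  Cmul (Cexpi (IZR (k - l) * theta)) (RtoC (BesselJ (k - l) (2 * Cabs g))).

(* square partial sums of sum_{m,n} U_{l,m} rho_{m,n} conj(U_{l,n}) *)
Definition Tpartial (g : Cplx) (rho : Z -> Z -> Cplx) (l : Z) (theta : R) (N : nat) : Cplx :=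
  sumZC N (fun m => sumZC N (fun n =>
    Cmul (Cmul (Umat g theta l m) (rho m n)) (Cconj (Umat g theta l n)))).

Definition Tmap (g : Cplx) (rho : Z -> Z -> Cplx) (l : Z) (theta : R) : Cplx :=
  (Rlim (fun N => fst (Tpartial g rho l theta N)),
   Rlim (fun N => snd (Tpartial g rho l theta N))).

Definition hs_partial (rho : Z -> Z -> Cplx) (N : nat) : R :=
  sumZ N (fun m => sumZ N (fun n => Cnorm2 (rho m n))).

Definition is_l2ZZ (rho : Z -> Z -> Cplx) : Prop :=
  exists M, forall N, hs_partial rho N <= M.

Definition l2ZZ_norm (rho : Z -> Z -> Cplx) : R := sqrt (Rlim (hs_partial rho)).

Definition T_L2norm (g : Cplx) (rho : Z -> Z -> Cplx) : R :=
  sqrt (Rlim (fun L => sumZ L (fun l =>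
     Rint (fun theta => Cnorm2 (Tmap g rho l theta)) (- PI) PI))).

(* Test the inequality ||rho|| <= C ||T rho|| on the matrix units
   rho_K = E_{0,K}, which all have Hilbert-Schmidt norm 1.  Since
   rho_K is a single entry, (T rho_K)(l, theta) = U_{l,0} conj(U_{l,K}), so
   |T rho_K (l, theta)|^2 = J_l(2|g|)^2 J_{l-K}(2|g|)^2 independently of theta.
   The Bessel functions decay (at least) geometrically in the order,
   |J_n(x)| <= C_x 2^{-|n|}, so the product is bounded by C^4 2^{-K} 2^{-|l|}
   and ||T rho_K||^2 <= 6 pi C^4 2^{-K} tends to 0, contradicting the
   inequality for K large. *)
From Stdlib Require Import Reals Lra Lia List ZArith FunctionalExtensionality ClassicalEpsilon.
Open Scope R_scope.

Lemma Rlim_eventually_const (u : nat -> R) (c : R) (N0 : nat) :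
  (forall N, (N0 <= N)%nat -> u N = c) -> Rlim u = c.
Proof.
  intros H.
  assert (Hc : Un_cv u c).
  { intros eps He. exists N0. intros n Hn. rewrite H by lia.
    unfold R_dist. rewrite Rminus_diag, Rabs_R0. lra. }
  unfold Rlim. destruct excluded_middle_informative as [Hx|Hx].
  - destruct (constructive_indefinite_description _ Hx) as [l Hl]. simpl.
    exact (UL_sequence u l c Hl Hc).
  - exfalso. apply Hx. exists c. exact Hc.
Qed.

(* Upper bounds pass to Rlim; a nonnegative bound also covers the junk value 0. *)
Lemma Rlim_le (u : nat -> R) (M : R) :
  (forall n, u n <= M) -> 0 <= M -> Rlim u <= M.
Proof.
  intros H HM. unfold Rlim. destruct excluded_middle_informative as [Hx|Hx].
  - destruct (constructive_indefinite_description _ Hx) as [l Hl]. simpl.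
    destruct (Rle_or_lt l M) as [|Hlt]; auto.
    destruct (Hl (l - M)) as [N HN]; [lra|].
    specialize (HN N (le_n N)). specialize (H N). unfold R_dist in HN.
    apply Rabs_def2 in HN. lra.
  - exact HM.
Qed.

Lemma Rlim_abs_le (u : nat -> R) (M : R) :
  (forall n, Rabs (u n) <= M) -> 0 <= M -> Rabs (Rlim u) <= M.
Proof.
  intros H HM. unfold Rlim. destruct excluded_middle_informative as [Hx|Hx].
  - destruct (constructive_indefinite_description _ Hx) as [l Hl]. simpl.
    destruct (Rle_or_lt (Rabs l) M) as [|Hlt]; auto.
    destruct (Hl (Rabs l - M)) as [N HN]; [lra|].
    specialize (HN N (le_n N)). specialize (H N). unfold R_dist in HN.
    pose proof (Rabs_triang_inv l (u N)). rewrite Rabs_minus_sym in HN. lra.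
  - rewrite Rabs_R0. exact HM.
Qed.

Lemma series_geometric_bound (a : nat -> R) (A : R) :
  0 <= A -> (forall k, Rabs (a k) <= A * (1/2) ^ k) -> Rabs (series a) <= 2 * A.
Proof.
  intros HA Ha. unfold series. apply Rlim_abs_le; [|lra]. intros N.
  eapply Rle_trans; [apply sum_f_R0_triangle|].
  eapply Rle_trans; [apply sum_Rle; intros k _; apply Ha|].
  rewrite <- (sum_eq (fun k => (1/2) ^ k * A)) by (intros; ring).
  rewrite <- scal_sum, tech3 by lra.
  assert (0 <= (1/2) ^ S N) by (apply pow_le; lra).
  replace ((1 - (1/2) ^ S N) / (1 - 1/2)) with (2 - 2 * (1/2) ^ S N) by field.
  nra.
Qed.

Lemma sumZ_le N f g : (forall l, f l <= g l) -> sumZ N f <= sumZ N g.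
Proof.
  intros H. unfold sumZ. induction (seq 0 (2 * N + 1)); simpl; [lra|].
  pose proof (H (Z.of_nat a - Z.of_nat N)%Z). lra.
Qed.

Lemma sumZ_scal N c f : sumZ N (fun l => c * f l) = c * sumZ N f.
Proof. unfold sumZ. induction (seq 0 (2 * N + 1)); simpl; [ring|]. rewrite IHl. ring. Qed.

Lemma fold_Rplus_init (s : list R) (a : R) :
  fold_right Rplus a s = fold_right Rplus 0 s + a.
Proof. induction s; simpl; [lra|]. rewrite IHs. lra. Qed.

Lemma sumZ_S N f :
  sumZ (S N) f = f (- Z.of_nat (S N))%Z + sumZ N f + f (Z.of_nat (S N)).
Proof.
  unfold sumZ.
  replace (2 * S N + 1)%nat with (1 + ((2 * N + 1) + 1))%nat by lia.
  rewrite seq_app, seq_app, !map_app, !fold_right_app.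
  cbn -[Z.of_nat Z.sub Nat.add Nat.mul].
  rewrite fold_Rplus_init. change (0 + 1)%nat with 1%nat.
  rewrite <- seq_shift, map_map.
  rewrite (map_ext (fun x : nat => f (Z.of_nat (S x) - Z.of_nat (S N))%Z)
                   (fun i => f (Z.of_nat i - Z.of_nat N)%Z))
    by (intros a; f_equal; lia).
  replace (Z.of_nat (1 + (2 * N + 1)) - Z.of_nat (S N))%Z with (Z.of_nat (S N)) by lia.
  replace (Z.of_nat 0 - Z.of_nat (S N))%Z with (- Z.of_nat (S N))%Z by lia.
  lra.
Qed.

Lemma sumZ_zero N h :
  (forall l, (- Z.of_nat N <= l <= Z.of_nat N)%Z -> h l = 0) -> sumZ N h = 0.
Proof.
  induction N; intros H.
  - unfold sumZ; simpl. rewrite H by lia. lra.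
  - rewrite sumZ_S, IHN by (intros; apply H; lia). rewrite !H by lia. lra.
Qed.

Lemma sumZ_nonneg N f : (forall l, 0 <= f l) -> 0 <= sumZ N f.
Proof.
  intros H. rewrite <- (sumZ_zero N (fun _ => 0)) by auto. apply sumZ_le. auto.
Qed.

Lemma sumZ_single N h z :
  (- Z.of_nat N <= z <= Z.of_nat N)%Z ->
  (forall l, l <> z -> h l = 0) -> sumZ N h = h z.
Proof.
  induction N; intros Hz H.
  - assert (z = 0%Z) by lia. subst. unfold sumZ; simpl. lra.
  - rewrite sumZ_S.
    destruct (Z.eq_dec z (- Z.of_nat (S N))) as [E|E].
    + subst. rewrite sumZ_zero by (intros; apply H; lia).
      rewrite (H (Z.of_nat (S N))) by lia. lra.
    + destruct (Z.eq_dec z (Z.of_nat (S N))) as [E2|E2].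
      * subst. rewrite sumZ_zero by (intros; apply H; lia).
        rewrite (H (- Z.of_nat (S N))%Z) by lia. lra.
      * rewrite IHN by (auto; lia).
        rewrite (H (Z.of_nat (S N))), (H (- Z.of_nat (S N))%Z) by lia. lra.
Qed.

Lemma sumZ_single_le N h z :
  (forall l, 0 <= h l) -> (forall l, l <> z -> h l = 0) -> sumZ N h <= h z.
Proof.
  intros Hp H.
  destruct (Z_le_dec (- Z.of_nat N) z); destruct (Z_le_dec z (Z.of_nat N)).
  - rewrite (sumZ_single N h z); auto. lra.
  - rewrite sumZ_zero by (intros; apply H; lia). apply Hp.
  - rewrite sumZ_zero by (intros; apply H; lia). apply Hp.
  - rewrite sumZ_zero by (intros; apply H; lia). apply Hp.
Qed.

Lemma sumZ_geometric N : sumZ N (fun l => (1/2) ^ (Z.abs_nat l)) = 3 - 2 * (1/2) ^ N.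
Proof.
  induction N.
  - unfold sumZ. simpl. lra.
  - rewrite sumZ_S, IHN.
    replace (Z.abs_nat (- Z.of_nat (S N))) with (S N) by lia.
    replace (Z.abs_nat (Z.of_nat (S N))) with (S N) by lia.
    simpl. lra.
Qed.

Lemma Cplx_ext (z w : Cplx) : fst z = fst w -> snd z = snd w -> z = w.
Proof. destruct z, w; simpl; intros -> ->; reflexivity. Qed.

Lemma sumZC_fst N f : fst (sumZC N f) = sumZ N (fun l => fst (f l)).
Proof.
  unfold sumZC, sumZ. induction (seq 0 (2 * N + 1)); simpl; auto. rewrite IHl. reflexivity.
Qed.

Lemma sumZC_snd N f : snd (sumZC N f) = sumZ N (fun l => snd (f l)).
Proof.
  unfold sumZC, sumZ. induction (seq 0 (2 * N + 1)); simpl; auto. rewrite IHl. reflexivity.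
Qed.

Lemma sumZC_zero N f : (forall l, f l = (0, 0)) -> sumZC N f = (0, 0).
Proof.
  intros H. apply Cplx_ext; rewrite ?sumZC_fst, ?sumZC_snd;
    apply sumZ_zero; intros l _; rewrite H; reflexivity.
Qed.

Lemma sumZC_single N f z :
  (- Z.of_nat N <= z <= Z.of_nat N)%Z ->
  (forall l, l <> z -> f l = (0, 0)) -> sumZC N f = f z.
Proof.
  intros Hz H. apply Cplx_ext; rewrite ?sumZC_fst, ?sumZC_snd;
    [apply (sumZ_single N (fun l => fst (f l)) z Hz)
    |apply (sumZ_single N (fun l => snd (f l)) z Hz)];
    intros l Hl; rewrite H by exact Hl; reflexivity.
Qed.

Lemma pow_half_antimono (m n : nat) : (n <= m)%nat -> (1/2) ^ m <= (1/2) ^ n.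
Proof.
  intros H. replace m with (n + (m - n))%nat by lia. rewrite pow_add.
  assert (0 < (1/2) ^ n) by (apply pow_lt; lra).
  assert ((1/2) ^ (m - n) <= 1) by (rewrite <- (pow1 (m - n)) at 2; apply pow_incr; lra).
  nra.
Qed.

(* c^n / n! is bounded: past n0 > c every step multiplies it by c/(n+1) <= 1. *)
Lemma pow_div_fact_bounded c :
  0 <= c -> exists E, 0 <= E /\ forall n, c ^ n / INR (fact n) <= E.
Proof.
  intros Hc. destruct (INR_unbounded c) as [n0 Hn0].
  exists ((1 + c) ^ n0). split; [apply pow_le; lra|].
  induction n.
  - simpl. unfold Rdiv. rewrite Rinv_1, Rmult_1_l, <- (pow1 n0) at 1. apply pow_incr. lra.
  - pose proof (INR_fact_lt_0 n). pose proof (pos_INR n).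
    assert (Hq : 0 <= c ^ n / INR (fact n)).
    { apply Rmult_le_pos; [apply pow_le; lra | left; apply Rinv_0_lt_compat; lra]. }
    change (fact (S n)) with (S n * fact n)%nat. rewrite mult_INR, S_INR. simpl pow.
    replace (c * c ^ n / ((INR n + 1) * INR (fact n))) with
      ((c ^ n / INR (fact n)) * (c / (INR n + 1))) by (field; lra).
    destruct (le_lt_dec (S n) n0) as [Hle|Hlt].
    + (* c^(n+1)/(n+1)! <= c^(n+1) <= (1+c)^(n+1) <= (1+c)^n0 *)
      assert (Hf : 1 <= INR (fact n)) by (apply (le_INR 1); pose proof (lt_O_fact n); lia).
      assert (c ^ n / INR (fact n) <= c ^ n).
      { unfold Rdiv. rewrite <- (Rmult_1_r (c ^ n)) at 2.
        apply Rmult_le_compat_l; [apply pow_le; lra|].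
        rewrite <- Rinv_1. apply Rinv_le_contravar; lra. }
      assert (c / (INR n + 1) <= c).
      { unfold Rdiv. rewrite <- (Rmult_1_r c) at 2. apply Rmult_le_compat_l; [lra|].
        rewrite <- Rinv_1. apply Rinv_le_contravar; lra. }
      assert (0 <= c / (INR n + 1)) by (apply Rmult_le_pos; [lra | left; apply Rinv_0_lt_compat; lra]).
      apply Rle_trans with (c ^ n * c).
      { apply Rmult_le_compat; auto. }
      apply Rle_trans with ((1 + c) ^ S n).
      { rewrite Rmult_comm. change (c * c ^ n) with (c ^ S n). apply pow_incr; lra. }
      apply Rle_pow; [lra | exact Hle].
    + assert (INR n0 <= INR n) by (apply le_INR; lia).
      assert (c / (INR n + 1) <= 1).
      { apply Rmult_le_reg_r with (INR n + 1); [lra|].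
        unfold Rdiv. rewrite Rmult_assoc, Rinv_l; lra. }
      assert (0 <= c / (INR n + 1)) by (apply Rmult_le_pos; [lra | left; apply Rinv_0_lt_compat; lra]).
      nra.
Qed.

(* Hence b^n / n! = (2b)^n / n! * 2^{-n} decays geometrically with ratio 1/2. *)
Lemma pow_div_fact_geometric b :
  0 <= b -> exists E, 0 <= E /\ forall n, b ^ n / INR (fact n) <= E * (1/2) ^ n.
Proof.
  intros Hb. destruct (pow_div_fact_bounded (2 * b)) as [E [HE H]]; [lra|].
  exists E. split; auto. intros n.
  replace (b ^ n) with ((2 * b) ^ n * (1/2) ^ n)
    by (rewrite <- Rpow_mult_distr; f_equal; lra).
  specialize (H n). pose proof (INR_fact_lt_0 n).
  assert (0 < (1/2) ^ n) by (apply pow_lt; lra).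
  unfold Rdiv in *. rewrite (Rmult_comm ((2 * b) ^ n)), Rmult_assoc, (Rmult_comm E).
  apply Rmult_le_compat_l; lra.
Qed.

Lemma bessel_term_bound (x : R) (n k : nat) :
  Rabs ((-1) ^ k / (INR (fact k) * INR (fact (k + n))) * (x / 2) ^ (2 * k + n))
  <= (Rabs (x / 2) * Rabs (x / 2)) ^ k / INR (fact k)
     * (Rabs (x / 2) ^ n / INR (fact n)).
Proof.
  set (b := Rabs (x / 2)). assert (Hb : 0 <= b) by apply Rabs_pos.
  pose proof (INR_fact_lt_0 k). pose proof (INR_fact_lt_0 (k + n)).
  pose proof (INR_fact_lt_0 n).
  assert (INR (fact n) <= INR (fact (k + n))) by (apply le_INR, fact_le; lia).
  rewrite Rabs_mult. unfold Rdiv.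
  rewrite Rabs_mult, pow_1_abs, Rabs_inv, Rabs_mult, !(Rabs_pos_eq (INR _)) by lra.
  rewrite <- RPow_abs. change (Rabs (x * / 2)) with b. rewrite pow_add, pow_mult.
  replace (b ^ 2) with (b * b) by ring.
  assert (0 <= (b * b) ^ k) by (apply pow_le; nra).
  assert (0 <= b ^ n) by (apply pow_le; lra).
  rewrite Rinv_mult.
  replace (1 * (/ INR (fact k) * / INR (fact (k + n))) * ((b * b) ^ k * b ^ n)) with
    (((b * b) ^ k * / INR (fact k)) * (b ^ n * / INR (fact (k + n)))) by ring.
  apply Rmult_le_compat_l.
  - apply Rmult_le_pos; auto. left; apply Rinv_0_lt_compat; lra.
  - apply Rmult_le_compat_l; auto. apply Rinv_le_contravar; lra.
Qed.

Lemma BesselJ_nat_decay x :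
  exists C, 0 <= C /\ forall n, Rabs (BesselJ_nat n x) <= C * (1/2) ^ n.
Proof.
  set (b := Rabs (x / 2)). assert (Hb : 0 <= b) by apply Rabs_pos.
  destruct (pow_div_fact_geometric (b * b)) as [E1 [HE1 H1]]; [nra|].
  destruct (pow_div_fact_geometric b) as [E2 [HE2 H2]]; [lra|].
  exists (2 * (E1 * E2)). split; [nra|]. intros n.
  assert (0 <= (1/2) ^ n) by (apply pow_le; lra).
  replace (2 * (E1 * E2) * (1/2) ^ n) with (2 * (E1 * E2 * (1/2) ^ n)) by ring.
  apply series_geometric_bound; [apply Rmult_le_pos; [apply Rmult_le_pos|]; auto|]. intros k.
  eapply Rle_trans; [apply bessel_term_bound|]. fold b.
  assert (0 <= (1/2) ^ k) by (apply pow_le; lra).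
  assert (0 <= (b * b) ^ k / INR (fact k)).
  { apply Rmult_le_pos; [apply pow_le; nra | left; apply Rinv_0_lt_compat, INR_fact_lt_0]. }
  assert (0 <= b ^ n / INR (fact n)).
  { apply Rmult_le_pos; [apply pow_le; lra | left; apply Rinv_0_lt_compat, INR_fact_lt_0]. }
  apply Rle_trans with ((E1 * (1/2) ^ k) * (E2 * (1/2) ^ n)).
  - apply Rmult_le_compat; auto.
  - right; ring.
Qed.

Lemma BesselJ_decay x :
  exists C, 0 <= C /\ forall n : Z, Rabs (BesselJ n x) <= C * (1/2) ^ (Z.abs_nat n).
Proof.
  destruct (BesselJ_nat_decay x) as [C [HC H]]. exists C. split; auto. intros n.
  unfold BesselJ. destruct (Z.leb 0 n) eqn:E.
  - apply Z.leb_le in E. replace (Z.abs_nat n) with (Z.to_nat n) by lia. apply H.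
  - apply Z.leb_gt in E. rewrite Rabs_mult, pow_1_abs, Rmult_1_l.
    replace (Z.abs_nat n) with (Z.to_nat (- n)) by lia. apply H.
Qed.

Lemma Cnorm2_mul a b : Cnorm2 (Cmul a b) = Cnorm2 a * Cnorm2 b.
Proof. destruct a, b; unfold Cnorm2, Cmul; simpl; ring. Qed.

Lemma Cnorm2_conj a : Cnorm2 (Cconj a) = Cnorm2 a.
Proof. destruct a; unfold Cnorm2, Cconj; simpl; ring. Qed.

(* |U_{k,l}(theta)|^2 = J_{k-l}(2|g|)^2, since |e^{i t}| = 1. *)
Lemma Cnorm2_Umat g th k l : Cnorm2 (Umat g th k l) = BesselJ (k - l) (2 * Cabs g) ^ 2.
Proof.
  unfold Umat. rewrite Cnorm2_mul. unfold Cnorm2, Cexpi, RtoC; simpl.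
  pose proof (sin2_cos2 (IZR (k - l) * th)) as Hsc. unfold Rsqr in Hsc. nra.
Qed.

Lemma Cmul_1_r u : Cmul u (1, 0) = u.
Proof. apply Cplx_ext; unfold Cmul; simpl; ring. Qed.

Lemma Cmul_0_r u : Cmul u (0, 0) = (0, 0).
Proof. apply Cplx_ext; unfold Cmul; simpl; ring. Qed.

Lemma Cmul_0_l u : Cmul (0, 0) u = (0, 0).
Proof. apply Cplx_ext; unfold Cmul; simpl; ring. Qed.

Lemma Rint_const c a b : Rint (fun _ => c) a b = c * (b - a).
Proof.
  unfold Rint. destruct excluded_middle_informative as [Hi|Hi].
  - apply (RiemannInt_P15 (c := c)).
  - exfalso. apply Hi. constructor. exact (RiemannInt_P14 a b c).
Qed.

Definition unit_matrix (a b : Z) (m n : Z) : Cplx :=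
  if Z.eq_dec m a then if Z.eq_dec n b then (1, 0) else (0, 0) else (0, 0).

Lemma Cnorm2_unit_matrix a b m n :
  Cnorm2 (unit_matrix a b m n) = if Z.eq_dec m a then if Z.eq_dec n b then 1 else 0 else 0.
Proof.
  unfold unit_matrix, Cnorm2.
  destruct (Z.eq_dec m a), (Z.eq_dec n b); simpl; ring.
Qed.

Lemma hs_partial_unit_matrix_le a b N : hs_partial (unit_matrix a b) N <= 1.
Proof.
  unfold hs_partial.
  assert (Hnn : forall m n, 0 <= Cnorm2 (unit_matrix a b m n)).
  { intros m n. rewrite Cnorm2_unit_matrix.
    destruct (Z.eq_dec m a), (Z.eq_dec n b); lra. }
  eapply Rle_trans; [apply (sumZ_single_le N _ a)|].
  - intros m. apply sumZ_nonneg. auto.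
  - intros m Hm. apply sumZ_zero. intros n _. rewrite Cnorm2_unit_matrix.
    destruct (Z.eq_dec m a); [contradiction | reflexivity].
  - eapply Rle_trans; [apply (sumZ_single_le N _ b); auto|].
    + intros n Hn. rewrite Cnorm2_unit_matrix.
      destruct (Z.eq_dec a a), (Z.eq_dec n b); tauto || reflexivity.
    + rewrite Cnorm2_unit_matrix.
      destruct (Z.eq_dec a a), (Z.eq_dec b b); try tauto. lra.
Qed.

Lemma hs_partial_unit_matrix a b N :
  (Z.abs_nat a <= N)%nat -> (Z.abs_nat b <= N)%nat -> hs_partial (unit_matrix a b) N = 1.
Proof.
  intros Ha Hb. unfold hs_partial.
  rewrite (sumZ_single N _ a) by
    (lia || (intros m Hm; apply sumZ_zero; intros n _; rewrite Cnorm2_unit_matrix;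
             destruct (Z.eq_dec m a); [contradiction | reflexivity])).
  rewrite (sumZ_single N _ b) by
    (lia || (intros n Hn; rewrite Cnorm2_unit_matrix;
             destruct (Z.eq_dec a a), (Z.eq_dec n b); tauto || reflexivity)).
  rewrite Cnorm2_unit_matrix. destruct (Z.eq_dec a a), (Z.eq_dec b b); tauto || reflexivity.
Qed.

Lemma unit_matrix_l2 a b : is_l2ZZ (unit_matrix a b).
Proof. exists 1. apply hs_partial_unit_matrix_le. Qed.

Lemma unit_matrix_norm a b : l2ZZ_norm (unit_matrix a b) = 1.
Proof.
  unfold l2ZZ_norm.
  rewrite (Rlim_eventually_const _ 1 (Nat.max (Z.abs_nat a) (Z.abs_nat b))).
  - apply sqrt_1.
  - intros N HN. apply hs_partial_unit_matrix; lia.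
Qed.

Lemma Tpartial_unit_matrix g a b l th N :
  (Z.abs_nat a <= N)%nat -> (Z.abs_nat b <= N)%nat ->
  Tpartial g (unit_matrix a b) l th N = Cmul (Umat g th l a) (Cconj (Umat g th l b)).
Proof.
  intros Ha Hb. unfold Tpartial.
  rewrite (sumZC_single N _ a) by
    (lia || (intros m Hm; apply sumZC_zero; intros n; unfold unit_matrix;
             destruct (Z.eq_dec m a); [contradiction | rewrite Cmul_0_r, Cmul_0_l; reflexivity])).
  rewrite (sumZC_single N _ b) by
    (lia || (intros n Hn; unfold unit_matrix;
             destruct (Z.eq_dec a a), (Z.eq_dec n b); try tauto;
             rewrite Cmul_0_r, Cmul_0_l; reflexivity)).
  unfold unit_matrix. destruct (Z.eq_dec a a), (Z.eq_dec b b); try tauto.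
  rewrite Cmul_1_r. reflexivity.
Qed.

Lemma Cnorm2_Tmap_unit_matrix g a b l th :
  Cnorm2 (Tmap g (unit_matrix a b) l th) =
  BesselJ (l - a) (2 * Cabs g) ^ 2 * BesselJ (l - b) (2 * Cabs g) ^ 2.
Proof.
  set (N0 := Nat.max (Z.abs_nat a) (Z.abs_nat b)).
  set (t := Cmul (Umat g th l a) (Cconj (Umat g th l b))).
  assert (Ht : forall N, (N0 <= N)%nat -> Tpartial g (unit_matrix a b) l th N = t)
    by (intros N HN; apply Tpartial_unit_matrix; lia).
  unfold Tmap.
  rewrite (Rlim_eventually_const _ (fst t) N0) by (intros N HN; rewrite Ht; auto).
  rewrite (Rlim_eventually_const _ (snd t) N0) by (intros N HN; rewrite Ht; auto).
  rewrite <- surjective_pairing. unfold t.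
  rewrite Cnorm2_mul, Cnorm2_conj, !Cnorm2_Umat. reflexivity.
Qed.

(* With |J_n| <= C 2^{-|n|}: since 2|l| + 2|l-K| >= K + |l|,
   J_l^2 J_{l-K}^2 <= C^4 2^{-K} 2^{-|l|}. *)
Lemma bessel_product_decay (x Cb : R) (K : nat) (l : Z) :
  0 <= Cb ->
  (forall n : Z, Rabs (BesselJ n x) <= Cb * (1/2) ^ (Z.abs_nat n)) ->
  BesselJ l x ^ 2 * BesselJ (l - Z.of_nat K) x ^ 2
  <= Cb ^ 4 * (1/2) ^ K * (1/2) ^ (Z.abs_nat l).
Proof.
  intros HCb HB.
  set (p := Z.abs_nat l). set (q := Z.abs_nat (l - Z.of_nat K)).
  assert (Hexp : (K + p <= p + p + q + q)%nat) by (unfold p, q; lia).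
  pose proof (pow_maj_Rabs _ _ 2 (HB l)) as H1.
  pose proof (pow_maj_Rabs _ _ 2 (HB (l - Z.of_nat K)%Z)) as H2.
  fold p in H1. fold q in H2.
  pose proof (pow_half_antimono _ _ Hexp) as Hm. rewrite !pow_add in Hm.
  assert (0 <= (1/2) ^ p) by (apply pow_le; lra).
  assert (0 <= (1/2) ^ q) by (apply pow_le; lra).
  assert (0 <= Cb ^ 4) by (apply pow_le; lra).
  apply Rle_trans with ((Cb * (1/2) ^ p) ^ 2 * (Cb * (1/2) ^ q) ^ 2).
  - apply Rmult_le_compat; auto; apply pow2_ge_0.
  - replace ((Cb * (1/2) ^ p) ^ 2 * (Cb * (1/2) ^ q) ^ 2) with
      (Cb ^ 4 * ((1/2) ^ p * (1/2) ^ p * (1/2) ^ q * (1/2) ^ q)) by ring.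
    rewrite (Rmult_assoc (Cb ^ 4) ((1/2) ^ K)). apply Rmult_le_compat_l; assumption.
Qed.

(* ||T E_{0,K}||^2 <= sum_l 2 pi C^4 2^{-K} 2^{-|l|} <= 6 pi C^4 2^{-K}. *)
Lemma T_L2norm_unit_matrix_bound g Cb K :
  0 <= Cb ->
  (forall n : Z, Rabs (BesselJ n (2 * Cabs g)) <= Cb * (1/2) ^ (Z.abs_nat n)) ->
  T_L2norm g (unit_matrix 0 (Z.of_nat K)) <= sqrt (3 * (2 * PI * Cb ^ 4 * (1/2) ^ K)).
Proof.
  intros HCb HB. unfold T_L2norm. apply sqrt_le_1_alt.
  set (D := 2 * PI * Cb ^ 4 * (1/2) ^ K).
  assert (HD : 0 <= D).
  { pose proof PI_RGT_0. assert (0 <= Cb ^ 4) by (apply pow_le; lra).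
    assert (0 <= (1/2) ^ K) by (apply pow_le; lra).
    unfold D. apply Rmult_le_pos; [apply Rmult_le_pos|]; nra. }
  apply Rlim_le; [|lra]. intros L.
  apply Rle_trans with (sumZ L (fun l => D * (1/2) ^ (Z.abs_nat l))).
  - apply sumZ_le. intros l.
    assert (Hconst : (fun th => Cnorm2 (Tmap g (unit_matrix 0 (Z.of_nat K)) l th))
        = (fun _ => BesselJ l (2 * Cabs g) ^ 2 * BesselJ (l - Z.of_nat K) (2 * Cabs g) ^ 2)).
    { apply functional_extensionality. intros th.
      rewrite Cnorm2_Tmap_unit_matrix, Z.sub_0_r. reflexivity. }
    rewrite Hconst, Rint_const.
    pose proof (bessel_product_decay _ _ K l HCb HB). pose proof PI_RGT_0.
    unfold D. nra.
  - rewrite sumZ_scal, sumZ_geometric.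
    assert (0 <= (1/2) ^ L) by (apply pow_le; lra). nra.
Qed.

Lemma T_unit_matrix_vanishes g eps :
  0 < eps -> exists K : nat, T_L2norm g (unit_matrix 0 (Z.of_nat K)) < eps.
Proof.
  intros Heps.
  destruct (BesselJ_decay (2 * Cabs g)) as [Cb [HCb HB]].
  set (A := 3 * (2 * PI * Cb ^ 4)).
  assert (HA : 0 <= A).
  { pose proof PI_RGT_0. assert (0 <= Cb ^ 4) by (apply pow_le; lra). unfold A. nra. }
  destruct (pow_lt_1_zero (1/2)) with (y := eps ^ 2 / (A + 1)) as [K HK].
  { rewrite Rabs_pos_eq; lra. }
  { apply Rdiv_lt_0_compat; [apply pow_lt|]; lra. }
  exists K. specialize (HK K (le_n K)).
  assert (Hpow : 0 <= (1/2) ^ K) by (apply pow_le; lra).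
  rewrite Rabs_pos_eq in HK by exact Hpow.
  assert (Hsmall : A * (1/2) ^ K < eps ^ 2).
  { apply Rle_lt_trans with ((A + 1) * (1/2) ^ K); [nra|].
    apply Rmult_lt_reg_r with (/ (A + 1)); [apply Rinv_0_lt_compat; lra|].
    replace ((A + 1) * (1/2) ^ K * / (A + 1)) with ((1/2) ^ K) by (field; lra).
    exact HK. }
  eapply Rle_lt_trans; [exact (T_L2norm_unit_matrix_bound g Cb K HCb HB)|].
  rewrite <- (sqrt_pow2 eps) by lra.
  apply sqrt_lt_1_alt. split.
  - unfold A in HA. nra.
  - unfold A in Hsmall. lra.
Qed.

Theorem mainTheorem5 (g : Cplx) (hg : g <> (0, 0)) :
  ~ (exists Cst : R, forall rho : Z -> Z -> Cplx,
        is_l2ZZ rho -> l2ZZ_norm rho <= Cst * T_L2norm g rho).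
Proof.
  intros [Cst HC].
  (* choose E_{0,K} with ||T E_{0,K}|| < 1/(|Cst|+1); then |Cst| ||T E_{0,K}|| < 1 *)
  assert (Hc : 0 < 1 / (Rabs Cst + 1)) by (pose proof (Rabs_pos Cst); apply Rdiv_lt_0_compat; lra).
  destruct (T_unit_matrix_vanishes g _ Hc) as [K HK].
  set (rho := unit_matrix 0 (Z.of_nat K)) in *.
  specialize (HC rho (unit_matrix_l2 _ _)). unfold rho in HC.
  rewrite unit_matrix_norm in HC. fold rho in HC.
  assert (HT : 0 <= T_L2norm g rho) by (unfold T_L2norm; apply sqrt_pos).
  assert (Habs : Cst * T_L2norm g rho <= Rabs Cst * T_L2norm g rho)
    by (apply Rmult_le_compat_r; [exact HT | apply Rle_abs]).
  assert (Hlt : Rabs Cst * T_L2norm g rho < 1).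
  { pose proof (Rabs_pos Cst).
    apply Rle_lt_trans with (Rabs Cst * (1 / (Rabs Cst + 1))); [nra|].
    replace (Rabs Cst * (1 / (Rabs Cst + 1))) with (1 - 1 / (Rabs Cst + 1)) by (field; lra).
    lra. }
  lra.
Qed.
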